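(* Consider the $2\times 1$ merge network with parameters $c>0$, $k>1$, $\eta\in(0,\tfrac12)$ and constant downstream queue length $Q\ge 0$: upstream queues $1,2$ have capacities $c_1=c$, $c_2=kc$ and inflows $f_1=\eta c$, $f_2=k\eta c$; the downstream queue has capacity $c_0=(k+1)c$. For weights $\gamma_0,\gamma_1,\gamma_2>0$ and an ordered pair $(u,s)\in\{(1,2),(2,1)\}$ (unsaturated queue $u$, saturated queue $s$) define $$q_{s,act}=\frac{\gamma_0}{\gamma_s}\Big(1-\frac{c_u}{c_s}\Big)Q+\frac{\gamma_u c_u}{\gamma_s c_s}f_u,\qquad \bar q_s=q_{s,act}+f_s-\tfrac12 c_s .$$ Let $\bar q_{s,classical}$ denote $\bar q_s$ for the classical weights $\gamma_0=\gamma_1=\gamma_2=1$, and $\bar q_{s,proposed}$ denote $\bar q_s$ for the proposed weights $\gamma_1=1/c_1$, $\gamma_2=1/c_2$, $\gamma_0=1/c_0$. Then, in regime R1, as $k\to\infty$: (i) for $(u,s)=(1,2)$ (with $Q=Q(k)$ satisfying $Q\ge \frac{k^2-\eta}{k-1}c$ and $Q\ge \frac{k-\eta}{k-1}(k+1)c$, the conditions under which this state exists for both weightings), $\bar q_{s,classical}/\bar q_{s,proposed}\to 1$; (ii) for $(u,s)=(2,1)$ (with $Q$, $c$, $\eta$ fixed), $\bar q_{s,classical}/\bar q_{s,proposed}\sim k$, i.e. $\bar q_{s,classical}/(k\,\bar q_{s,proposed})\to 1$.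
   Context: Model: discrete time $t=0,1,2,\dots$; two upstream queues $q_1(t),q_2(t)\ge 0$ merge into one downstream queue whose length is held constant at $Q$. The priority of upstream queue $i$ is $p_i(t)=(\gamma_i q_i(t)-\gamma_0 Q)c_i$. At each time step exactly one upstream queue is activated, one with maximal priority; the activated queue evolves as $q_i(t+1)=q_i(t)-\min(q_i(t),c_i)+f_i$, the other as $q_j(t+1)=q_j(t)+f_j$. Regime R1 means exactly one upstream queue (denoted $u$) is in the unsaturated regime (its outflow $\min(q_u,c_u)$ is below capacity) while the other (denoted $s$) is saturated (its outflow when activated equals $c_s$). The quantity $\bar q_s$ is the paper's approximation of the average steady-state length of the saturated queue, which measures time spent in the network. The weights $\gamma\equiv 1$ give the classical backpressure algorithm; the weights $\gamma=1/\text{capacity}$ give the proposed re-scaled algorithm. *)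

From Stdlib Require Import Reals.
From Coquelicot Require Import Coquelicot.
Open Scope R_scope.

(* 2x1 merge network with parameters c, k, eta.
   Queue indices: 0 = downstream, 1 and 2 = upstream. *)

Definition cap (c k : R) (i : nat) : R :=
  match i with
  | O => (k + 1) * c
  | 1%nat => c
  | _ => k * c
  end.

Definition inflow (c k eta : R) (i : nat) : R :=
  match i with
  | O => 0
  | 1%nat => eta * c
  | _ => k * eta * c
  end.

Definition q_act (g : nat -> R) (c k eta Q : R) (u s : nat) : R :=
  g O / g s * (1 - cap c k u / cap c k s) * Q
  + g u * cap c k u / (g s * cap c k s) * inflow c k eta u.

Definition qbar (g : nat -> R) (c k eta Q : R) (u s : nat) : R :=
  q_act g c k eta Q u s + inflow c k eta s - cap c k s / 2.

Definition gamma_classical : nat -> R := fun _ => 1.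

Definition gamma_proposed (c k : R) : nat -> R := fun i => / cap c k i.

(* Both ratios tend to 1 at rate O(1/k).  In case (u,s) = (1,2) the two
   values of qbar_s differ by (Q/(k+1) - eta c)(k-1)/k, while the existence
   condition Q >= (k - eta)(k+1)c/(k-1) makes the proposed qbar_s at least
   half of Q(k-1)/(k+1), so the relative gap is O(1/k).  In case (u,s) = (2,1) the
   classical qbar_s is k^2 eta c + O(k) and the proposed one is
   k eta c + O(1), because its queue term (1-k)/(k+1) Q stays bounded. *)

From Stdlib Require Import Reals Lra Psatz.
From Coquelicot Require Import Coquelicot.
Open Scope R_scope.

Lemma is_lim_p_infty_of_rate (f : R -> R) (l M A : R) :
  (forall k, M < k -> Rabs (f k - l) <= A / k) -> is_lim f p_infty l.
Proof.
  intros Hrate. apply is_lim_spec. intros [eps Heps]; simpl.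
  exists (Rmax (Rmax M 0) (Rabs A / eps)). intros k Hk.
  pose proof (Rmax_l (Rmax M 0) (Rabs A / eps)) as HM0.
  pose proof (Rmax_r (Rmax M 0) (Rabs A / eps)) as HA.
  pose proof (Rmax_l M 0). pose proof (Rmax_r M 0).
  assert (Hk0 : 0 < k) by lra.
  apply Rle_lt_trans with (A / k); [apply Hrate; lra|].
  apply Rle_lt_trans with (Rabs A / k).
  { apply Rmult_le_compat_r; [apply Rlt_le, Rinv_0_lt_compat; lra|apply RRle_abs]. }
  assert (HAk : Rabs A / eps < k) by lra.
  apply Rlt_div_l in HAk; [|lra].
  apply Rlt_div_l; lra.
Qed.

Lemma Rabs_div_sub1_le (N D e : R) :
  0 < D -> Rabs (N - D) <= e * D -> Rabs (N / D - 1) <= e.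
Proof.
  intros HD H.
  replace (N / D - 1) with ((N - D) / D) by (field; lra).
  rewrite Rabs_div, (Rabs_pos_eq D) by lra.
  apply Rle_div_l; lra.
Qed.

Section MergeNetwork.

Variables c k eta : R.
Hypothesis c_gt0 : 0 < c.
Hypothesis k_gt0 : 0 < k.

Lemma qbar_classical_12 (Q : R) :
  qbar gamma_classical c k eta Q 1 2
  = (k - 1) / k * Q + eta * c / k + k * eta * c - k * c / 2.
Proof.
  unfold qbar, q_act, gamma_classical, cap, inflow; field; lra.
Qed.

Lemma qbar_proposed_12 (Q : R) :
  qbar (gamma_proposed c k) c k eta Q 1 2
  = (k - 1) / (k + 1) * Q + eta * c + k * eta * c - k * c / 2.
Proof.
  unfold qbar, q_act, gamma_proposed, cap, inflow; field; lra.
Qed.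

Lemma qbar_classical_21 (Q : R) :
  qbar gamma_classical c k eta Q 2 1
  = (1 - k) * Q + k * k * (eta * c) + eta * c - c / 2.
Proof.
  unfold qbar, q_act, gamma_classical, cap, inflow; field; lra.
Qed.

Lemma qbar_proposed_21 (Q : R) :
  qbar (gamma_proposed c k) c k eta Q 2 1
  = - ((k - 1) / (k + 1) * Q) + k * (eta * c) + eta * c - c / 2.
Proof.
  unfold qbar, q_act, gamma_proposed, cap, inflow; field; lra.
Qed.

Hypothesis eta_gt0 : 0 < eta.

Lemma qbar_ratio_12_rate (Q : R) :
  1 < k -> Q >= (k - eta) / (k - 1) * ((k + 1) * c) ->
  Rabs (qbar gamma_classical c k eta Q 1 2
        / qbar (gamma_proposed c k) c k eta Q 1 2 - 1) <= 2 / k.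
Proof.
  intros Hk HQ.
  rewrite qbar_classical_12, qbar_proposed_12.
  set (P := (k - 1) / (k + 1) * Q).
  assert (HP : (k - eta) * c <= P).
  { unfold P.
    replace ((k - eta) * c)
      with ((k - 1) / (k + 1) * ((k - eta) / (k - 1) * ((k + 1) * c)))
      by (field; lra).
    apply Rmult_le_compat_l; [apply Rlt_le, Rdiv_lt_0_compat|]; lra. }
  assert (Hec : 0 < eta * c) by nra.
  assert (Hkec : 0 < k * (eta * c)) by nra.
  apply Rabs_div_sub1_le; [nra|].
  replace ((k - 1) / k * Q + eta * c / k + k * eta * c - k * c / 2
           - (P + eta * c + k * eta * c - k * c / 2))
    with ((P + eta * c - k * eta * c) / k) by (unfold P; field; lra).
  rewrite Rabs_div, (Rabs_pos_eq k) by lra.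
  replace (2 / k * (P + eta * c + k * eta * c - k * c / 2))
    with (2 * (P + eta * c + k * eta * c - k * c / 2) / k) by (field; lra).
  apply Rmult_le_compat_r; [apply Rlt_le, Rinv_0_lt_compat; lra|].
  apply Rabs_le; nra.
Qed.

Hypothesis eta_lt_half : eta < 1 / 2.

Lemma qbar_ratio_21_rate (Q : R) :
  0 <= Q -> 2 * (Q + c) / (eta * c) < k ->
  Rabs (qbar gamma_classical c k eta Q 2 1
        / (k * qbar (gamma_proposed c k) c k eta Q 2 1) - 1)
  <= (eta * c + c) / (eta * c) / k.
Proof.
  intros HQ Hk.
  assert (Ha : 0 < eta * c) by nra.
  assert (Hac : eta * c < c / 2) by nra.
  rewrite qbar_classical_21, qbar_proposed_21.
  set (a := eta * c) in *; clearbody a.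
  assert (HkQ : 2 * (Q + c) < k * a) by (apply Rlt_div_l; lra).
  assert (Hk1 : 1 < k) by nra.
  set (P := (k - 1) / (k + 1) * Q).
  assert (HP : 0 <= P <= Q).
  { unfold P; split.
    - apply Rmult_le_pos; [apply Rlt_le, Rdiv_lt_0_compat|]; nra.
    - apply Rle_trans with (1 * Q); [|lra].
      apply Rmult_le_compat_r; [lra|]. apply Rle_div_l; lra. }
  set (D := k * (- P + k * a + a - c / 2)).
  (* P <= Q <= k a / 2 *)
  assert (HD : k * (k * a / 2) <= D).
  { unfold D. apply Rmult_le_compat_l; lra. }
  assert (HD0 : 0 < k * (k * a / 2)) by nra.
  apply Rabs_div_sub1_le; [lra|].
  replace ((1 - k) * Q + k * k * a + a - c / 2 - D)
    with (- P + (k - 1) * (c / 2 - a)) by (unfold D, P; field; lra).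
  apply Rle_trans with (k * (a + c) / 2).
  { assert (0 <= (k - 1) * (c / 2 - a)) by (apply Rmult_le_pos; lra).
    apply Rabs_le; split; nra. }
  apply Rle_trans with ((a + c) / a / k * (k * (k * a / 2))).
  { right. field. lra. }
  apply Rmult_le_compat_l; [|lra].
  apply Rlt_le, Rdiv_lt_0_compat; [apply Rdiv_lt_0_compat|]; lra.
Qed.

End MergeNetwork.

Theorem theorem2 (c eta Q0 : R) (Qk : R -> R) :
  0 < c -> 0 < eta < 1/2 -> 0 <= Q0 ->
  (forall k, 1 < k ->
     0 <= Qk k /\
     Qk k >= (k ^ 2 - eta) / (k - 1) * c /\
     Qk k >= (k - eta) / (k - 1) * ((k + 1) * c)) ->
  (* (i) (u,s) = (1,2), Q = Q(k) *)
  is_lim (fun k => qbar gamma_classical c k eta (Qk k) 1 2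
                   / qbar (gamma_proposed c k) c k eta (Qk k) 1 2)
         p_infty 1
  /\
  (* (ii) (u,s) = (2,1), Q fixed *)
  is_lim (fun k => qbar gamma_classical c k eta Q0 2 1
                   / (k * qbar (gamma_proposed c k) c k eta Q0 2 1))
         p_infty 1.
Proof.
  intros Hc [Heta0 Heta1] HQ0 HQk. split.
  - apply (is_lim_p_infty_of_rate _ 1 1 2). intros k Hk.
    destruct (HQk k Hk) as [_ [_ HQ]].
    apply qbar_ratio_12_rate; lra.
  - apply (is_lim_p_infty_of_rate _ 1 (2 * (Q0 + c) / (eta * c))
             ((eta * c + c) / (eta * c))).
    intros k Hk.
    assert (0 < 2 * (Q0 + c) / (eta * c))
      by (apply Rdiv_lt_0_compat; nra).
    apply qbar_ratio_21_rate; lra.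
Qed.
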